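(* Let $n\ge 6$ and let $K_n$ be a random linear embedding of the complete graph on $n$ vertices in $C^3$. Then the mean sum of squared linking numbers of $K_n$ equals $$\frac{q}{16}\sum_{k=3}^{n-3}\sum_{l=3}^{n-k}\frac{n!}{(n-k-l)!}=\frac{q}{16}\sum_{i=6}^{n}\frac{n!}{(n-i)!}(i-5),$$ where $q$ is the constant defined in the context.
   Context: A random linear embedding of a graph $G$ in $C^3=[0,1]^3$: the vertices are placed at independent uniformly distributed points of $C^3$, and each edge is realized as the straight segment between its endpoints. The mean sum of squared linking numbers of the embedded graph is $E\big[\sum \mathrm{lk}(C,C')^2\big]$, the sum taken over all unordered pairs $\{C,C'\}$ of vertex-disjoint cycles of the graph (each of length $\ge3$). For oriented segments $l,l'$, $\epsilon(l,l')$ denotes the signed crossing in orthogonal projection onto a fixed plane ($0$ if the projections do not cross, else $\pm1$ by the right-hand rule). With $A,B,C,P,Q,R$ independent uniform points in $C^3$ and $X\to Y$ the segment oriented from $X$ to $Y$: $2s=P(\epsilon(A\to B,P\to Q)\ne0)$, $u=E[\epsilon(A\to B,P\to Q)\epsilon(A\to B,Q\to R)]$, $v=E[\epsilon(A\to B,P\to Q)\epsilon(B\to C,Q\to R)]$, and $q=s+2(u+v)>0$. *)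

From Stdlib Require Import Reals List Arith Bool.
Import ListNotations.
Open Scope R_scope.
Open Scope bool_scope.

Definition pt : Type := (R * R * R)%type.

Definition cross2 (x1 y1 x2 y2 : R) : R := x1 * y2 - y1 * x2.

Definition rsign (x : R) : R :=
  if Rlt_dec 0 x then 1 else if Rlt_dec x 0 then -1 else 0.

Definition in01 (t : R) : bool :=
  if Rlt_dec 0 t then (if Rlt_dec t 1 then true else false) else false.

(** Signed crossing eps(A->B, P->Q) of the orthogonal projections onto the
    xy-plane (viewed from +z, larger z = over).  It is 0 if the projected
    segments do not cross (transversally, at interior points), otherwise the
    sign of the crossing by the right-hand rule: sgn of the 2D cross product
    (over-direction x under-direction). *)
Definition eps (A B P Q : pt) : R :=
  let '(ax, ay, az) := A in
  let '(bx, by_, bz) := B in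
  let '(px, py, pz) := P in
  let '(qx, qy, qz) := Q in
  let D := cross2 (bx - ax) (by_ - ay) (qx - px) (qy - py) in
  if Req_EM_T D 0 then 0 else
  let t := cross2 (px - ax) (py - ay) (qx - px) (qy - py) / D in
  let t' := cross2 (px - ax) (py - ay) (bx - ax) (by_ - ay) / D in
  if in01 t && in01 t' then
    rsign D * rsign ((az + t * (bz - az)) - (pz + t' * (qz - pz)))
  else 0.

Definition rsum {A : Type} (f : A -> R) (l : list A) : R :=
  fold_right (fun a acc => f a + acc) 0 l.

(** Cycles of the complete graph K_n on vertices 0..n-1.  A cycle is given by
    its canonical vertex list [v0; v1; ...; v_{k-1}] (k >= 3, distinct
    vertices, v0 the minimal vertex, v1 < v_{k-1}); this represents each
    (unoriented) cycle exactly once.  Its edges are v_i -> v_{i+1 mod k}. *)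
Fixpoint words (n k : nat) : list (list nat) :=
  match k with
  | O => [[]]
  | S k => flat_map (fun w => map (fun i => i :: w) (seq 0 n)) (words n k)
  end.

Fixpoint nodupb (l : list nat) : bool :=
  match l with
  | [] => true
  | a :: l => negb (existsb (Nat.eqb a) l) && nodupb l
  end.

Definition canon (c : list nat) : bool :=
  match c with
  | a :: b :: l =>
      (3 <=? length c)%nat && nodupb c
      && forallb (fun v => (a <? v)%nat) (b :: l)
      && (b <? last (b :: l) 0)%nat
  | _ => false
  end.

Definition cycles (n : nat) : list (list nat) :=
  flat_map (fun k => filter canon (words n k)) (seq 3 (n - 2)).

Definition disjointb (c c' : list nat) : bool :=
  forallb (fun v => negb (existsb (Nat.eqb v) c')) c.

(** Unordered pairs {C, C'} of vertex-disjoint cycles, each listed once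
    (ordered by their minimal vertex). *)
Definition cycle_pairs (n : nat) : list (list nat * list nat) :=
  filter (fun p => disjointb (fst p) (snd p) && (hd 0 (fst p) <? hd 0 (snd p))%nat)
    (list_prod (cycles n) (cycles n)).

Definition cyc_edges (c : list nat) : list (nat * nat) :=
  combine c (tl c ++ firstn 1 c).

Definition lk (X : nat -> pt) (c c' : list nat) : R :=
  / 2 * rsum (fun e => rsum (fun e' =>
          eps (X (fst e)) (X (snd e)) (X (fst e')) (X (snd e'))) (cyc_edges c'))
        (cyc_edges c).

Definition sum_sq_lk (n : nat) (X : nat -> pt) : R :=
  rsum (fun p => (lk X (fst p) (snd p)) ^ 2) (cycle_pairs n).

(** Expectation w.r.t. the uniform distribution on [0,1]^m, realised as the
    limit (N -> oo) of midpoint-grid averages:  gavg N m F is the average of F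
    over the grid {(2a+1)/(2N) : a < N}^m (coordinates 0..m-1). *)
Fixpoint gavg (N m : nat) (F : (nat -> R) -> R) : R :=
  match m with
  | O => F (fun _ => 0)
  | S m => / INR N * rsum (fun a =>
             gavg N m (fun g => F (fun j =>
               if Nat.eqb j m then (2 * INR a + 1) / (2 * INR N) else g j)))
           (seq 0 N)
  end.

Definition vpos (x : nat -> R) (i : nat) : pt :=
  (x (3 * i)%nat, x (3 * i + 1)%nat, x (3 * i + 2)%nat).

(** Grid average over k independent points of the cube C^3 = [0,1]^3. *)
Definition ptE (N k : nat) (G : (nat -> pt) -> R) : R :=
  gavg N (3 * k) (fun x => G (vpos x)).

Definition Expect_is (k : nat) (G : (nat -> pt) -> R) (L : R) : Prop :=
  Un_cv (fun N => ptE (S N) k G) L.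

(* Everything is first proved exactly for the uniform distribution on an
   arbitrary finite nonempty set of points, of which the grid averages defining
   [Expect_is] are instances; the limit is taken only at the very end.
   Expanding lk(C, C')^2 = 1/4 sum eps(e1, e1') eps(e2, e2') over edges e1, e2
   of C and e1', e2' of C', the mean of a term depends only on the position of
   e2 relative to e1 and of e2' relative to e1': the points are exchangeable, so
   relabelling vertices preserves means, and if e1 and e2 share no vertex then
   exchanging the endpoints of e1 flips the sign of the term, so its mean
   vanishes.  The surviving configurations (equal or adjacent edges) contribute
   2s, u or v, whence E[lk(C, C')^2] = |C| |C'| q / 2.  As K_n has
   n!/((n-k)! 2k) cycles of length k, summing |C| |C'| over unordered pairs of
   disjoint cycles gives S1 / 8. *)

From Stdlib Require Import Reals List Arith Bool Lia Lra FunctionalExtensionality.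
Import ListNotations.
Open Scope R_scope.

Ltac destruct_eqbs :=
  repeat (match goal with |- context [Nat.eqb ?x ?y] => destruct (Nat.eqb_spec x y) end;
          cbv beta iota).

(** * Finite sums *)

Lemma rsum_cons {A} (f : A -> R) a l : rsum f (a :: l) = f a + rsum f l.
Proof. reflexivity. Qed.

Lemma rsum_app {A} (f : A -> R) l1 l2 : rsum f (l1 ++ l2) = rsum f l1 + rsum f l2.
Proof. induction l1; simpl; [ring | rewrite IHl1; ring]. Qed.

Lemma rsum_ext_in {A} (f g : A -> R) l :
  (forall x, In x l -> f x = g x) -> rsum f l = rsum g l.
Proof.
  induction l as [|a l IH]; intros H; simpl; [reflexivity|].
  rewrite H, IH; [reflexivity | intros x Hx; apply H; right; exact Hx | left; reflexivity].
Qed.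

Lemma rsum_ext {A} (f g : A -> R) l : (forall x, f x = g x) -> rsum f l = rsum g l.
Proof. intros; apply rsum_ext_in; auto. Qed.

Lemma rsum_plus {A} (f g : A -> R) l : rsum (fun x => f x + g x) l = rsum f l + rsum g l.
Proof. induction l; simpl; [ring | rewrite IHl; ring]. Qed.

Lemma rsum_minus {A} (f g : A -> R) l : rsum (fun x => f x - g x) l = rsum f l - rsum g l.
Proof. induction l; simpl; [ring | rewrite IHl; ring]. Qed.

Lemma rsum_scal {A} (c : R) (f : A -> R) l : rsum (fun x => c * f x) l = c * rsum f l.
Proof. induction l; simpl; [ring | rewrite IHl; ring]. Qed.

Lemma rsum_scal_r {A} (c : R) (f : A -> R) l : rsum (fun x => f x * c) l = rsum f l * c.
Proof. induction l; simpl; [ring | rewrite IHl; ring]. Qed.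

Lemma rsum_const {A} (c : R) (l : list A) : rsum (fun _ => c) l = INR (length l) * c.
Proof.
  induction l; [simpl; ring|].
  change (c + rsum (fun _ => c) l = INR (S (length l)) * c). rewrite IHl, S_INR; ring.
Qed.

Lemma rsum_zero {A} (l : list A) : rsum (fun _ => 0) l = 0.
Proof. rewrite rsum_const; ring. Qed.

Lemma rsum_map {A B} (f : B -> R) (g : A -> B) l : rsum f (map g l) = rsum (fun x => f (g x)) l.
Proof. induction l; simpl; [ring | rewrite IHl; ring]. Qed.

Lemma rsum_flat_map {A B} (f : B -> R) (g : A -> list B) l :
  rsum f (flat_map g l) = rsum (fun x => rsum f (g x)) l.
Proof. induction l; simpl; [ring | rewrite rsum_app, IHl; ring]. Qed.

Lemma rsum_exch {A B} (f : A -> B -> R) l1 l2 :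
  rsum (fun x => rsum (fun y => f x y) l2) l1 = rsum (fun y => rsum (fun x => f x y) l1) l2.
Proof.
  induction l1; simpl; [symmetry; apply rsum_zero|].
  rewrite IHl1, <- rsum_plus. reflexivity.
Qed.

Lemma rsum_mult {A B} (f : A -> R) (g : B -> R) l1 l2 :
  rsum f l1 * rsum g l2 = rsum (fun x => rsum (fun y => f x * g y) l2) l1.
Proof. rewrite <- rsum_scal_r. apply rsum_ext; intro; rewrite <- rsum_scal; reflexivity. Qed.

Lemma rsum_filter {A} (f : A -> R) (P : A -> bool) l :
  rsum f (filter P l) = rsum (fun x => if P x then f x else 0) l.
Proof. induction l; simpl; [ring|]. destruct (P a); simpl; rewrite IHl; ring. Qed.

Lemma rsum_list_prod {A B} (f : A * B -> R) l1 l2 :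
  rsum f (list_prod l1 l2) = rsum (fun x => rsum (fun y => f (x, y)) l2) l1.
Proof. induction l1; simpl; [ring|]. rewrite rsum_app, rsum_map, IHl1; reflexivity. Qed.

Lemma rsum_seq_delta (a n : nat) (c : R) : (a < n)%nat ->
  rsum (fun j => if Nat.eqb j a then c else 0) (seq 0 n) = c.
Proof.
  induction n as [|n IH]; intros H; [lia|].
  rewrite seq_S, rsum_app; simpl.
  destruct (Nat.eqb_spec n a) as [->|Hna].
  - rewrite (rsum_ext_in _ (fun _ => 0)), rsum_zero; [ring|].
    intros x Hx; apply in_seq in Hx. destruct (Nat.eqb_spec x a); [lia | reflexivity].
  - rewrite IH by lia; ring.
Qed.

(** * Averages over independent points drawn from a finite set *)

Definition origin : pt := (0, 0, 0).

Definition upd (X : nat -> pt) (m : nat) (p : pt) : nat -> pt :=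
  fun i => if Nat.eqb i m then p else X i.

Definition avg (L : list pt) (f : pt -> R) : R := / INR (length L) * rsum f L.

(* Points [X m], [X (m+1)], ... are not drawn and sit at the origin. *)
Fixpoint avgn (L : list pt) (m : nat) (G : (nat -> pt) -> R) : R :=
  match m with
  | O => G (fun _ => origin)
  | S m => avg L (fun p => avgn L m (fun X => G (upd X m p)))
  end.

Definition depends_below (m : nat) (G : (nat -> pt) -> R) : Prop :=
  forall Y Y', (forall i, (i < m)%nat -> Y i = Y' i) -> G Y = G Y'.

Lemma upd_same X m p q : upd (upd X m p) m q = upd X m q.
Proof. apply functional_extensionality; intro i; unfold upd. destruct (Nat.eqb i m); auto. Qed.

Lemma upd_comm X a b p q : a <> b -> upd (upd X a p) b q = upd (upd X b q) a p.
Proof.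
  intros; apply functional_extensionality; intro i; unfold upd.
  destruct (Nat.eqb_spec i b), (Nat.eqb_spec i a); auto; lia.
Qed.

Section FiniteAverages.

Variable L : list pt.
Hypothesis L_nonempty : L <> [].

Lemma avg_ext f g : (forall p, f p = g p) -> avg L f = avg L g.
Proof. intros; unfold avg; rewrite (rsum_ext f g); auto. Qed.

Lemma avg_const c : avg L (fun _ => c) = c.
Proof.
  unfold avg; rewrite rsum_const. field.
  destruct L; [congruence|]. apply not_0_INR; simpl; lia.
Qed.

Lemma avg_exch (f : pt -> pt -> R) :
  avg L (fun p => avg L (fun q => f p q)) = avg L (fun q => avg L (fun p => f p q)).
Proof. unfold avg. rewrite !rsum_scal, rsum_exch. reflexivity. Qed.

Lemma avgn_ext m : forall F G, (forall X, F X = G X) -> avgn L m F = avgn L m G.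
Proof.
  induction m; intros F G H; simpl; auto.
  apply avg_ext; intro p; apply IHm; auto.
Qed.

Lemma avgn_scal m : forall c F, avgn L m (fun X => c * F X) = c * avgn L m F.
Proof.
  induction m; intros c F; simpl; auto.
  unfold avg. rewrite (rsum_ext _ (fun p => c * avgn L m (fun X => F (upd X m p)))).
  - rewrite rsum_scal; ring.
  - intros; apply IHm.
Qed.

Lemma avgn_plus m : forall F G, avgn L m (fun X => F X + G X) = avgn L m F + avgn L m G.
Proof.
  induction m; intros F G; simpl; auto.
  unfold avg. rewrite (rsum_ext _ (fun p => avgn L m (fun X => F (upd X m p))
                                           + avgn L m (fun X => G (upd X m p)))).
  - rewrite rsum_plus; ring.
  - intros; apply IHm.
Qed.

Lemma avgn_opp m F : avgn L m (fun X => - F X) = - avgn L m F.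
Proof.
  rewrite (avgn_ext _ _ (fun X => (-1) * F X)) by (intros; ring).
  rewrite avgn_scal; ring.
Qed.

Lemma avgn_rsum {A} m (F : A -> (nat -> pt) -> R) l :
  avgn L m (fun X => rsum (fun a => F a X) l) = rsum (fun a => avgn L m (F a)) l.
Proof.
  induction l as [|a l IH]; simpl.
  - rewrite (avgn_ext _ _ (fun X => 0 * 0)) by (intros; ring). rewrite avgn_scal; ring.
  - rewrite avgn_plus, IH; reflexivity.
Qed.

Lemma avgn_const m c : avgn L m (fun _ => c) = c.
Proof.
  induction m; simpl; auto.
  rewrite (avg_ext _ (fun _ => c)); [apply avg_const | intros; apply IHm].
Qed.

Lemma avgn_pull m : forall j F, (j < m)%nat ->
  avgn L m F = avg L (fun q => avgn L m (fun X => F (upd X j q))).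
Proof.
  induction m; intros j F Hj; [lia|]. simpl.
  destruct (Nat.eq_dec j m) as [->|Hjm].
  - apply avg_ext; intro q.
    rewrite (avg_ext _ (fun _ => avgn L m (fun X => F (upd X m q)))), avg_const; [reflexivity|].
    intro p. apply avgn_ext; intro X. rewrite upd_same; auto.
  - rewrite (avg_ext (fun p => avgn L m (fun X => F (upd X m p)))
      (fun p => avg L (fun q => avgn L m (fun X => F (upd (upd X j q) m p))))).
    2:{ intro p. apply (IHm j (fun X => F (upd X m p))). lia. }
    rewrite avg_exch. apply avg_ext; intro q. apply avg_ext; intro p.
    apply avgn_ext; intro X. rewrite upd_comm by lia. reflexivity.
Qed.

Lemma avgn_relabel k : forall m rho G,
  (forall i, (i < m)%nat -> (rho i < k)%nat) ->
  (forall i j, (i < m)%nat -> (j < m)%nat -> rho i = rho j -> i = j) ->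
  depends_below m G ->
  avgn L k (fun X => G (fun i => X (rho i))) = avgn L m G.
Proof.
  induction m as [|m IH]; intros rho G Hrho Hinj HG.
  - rewrite (avgn_ext _ _ (fun _ => G (fun _ => origin))), avgn_const; [reflexivity|].
    intro X; apply HG; lia.
  - simpl. rewrite (avgn_pull k (rho m)) by auto. apply avg_ext; intro p.
    rewrite <- (IH rho (fun Y => G (upd Y m p))).
    + apply avgn_ext; intro X. apply HG; intros i Hi. unfold upd.
      destruct (Nat.eqb_spec i m) as [->|Him]; [rewrite Nat.eqb_refl; reflexivity|].
      destruct (Nat.eqb_spec (rho i) (rho m)) as [E|]; [|reflexivity].
      apply Hinj in E; lia.
    + intros; apply Hrho; lia.
    + intros; apply Hinj; lia.
    + intros Y Y' HY. apply HG; intros i Hi. unfold upd.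
      destruct (Nat.eqb_spec i m); [reflexivity | apply HY; lia].
Qed.

Lemma avgn_relabel_list n vs G : NoDup vs -> (forall v, In v vs -> (v < n)%nat) ->
  depends_below (length vs) G ->
  avgn L n (fun X => G (fun i => X (nth i vs 0%nat))) = avgn L (length vs) G.
Proof.
  intros Hnd Hv HG. apply avgn_relabel; auto.
  - intros i Hi. apply Hv, nth_In; auto.
  - intros i j Hi Hj. apply NoDup_nth; auto.
Qed.

Definition swap (a b i : nat) : nat :=
  if Nat.eqb i a then b else if Nat.eqb i b then a else i.

Lemma swap_invol a b i : swap a b (swap a b i) = i.
Proof.
  unfold swap. destruct (Nat.eqb_spec i a), (Nat.eqb_spec i b); destruct_eqbs; lia.
Qed.

Lemma swap_l a b : swap a b a = b.
Proof. unfold swap. rewrite Nat.eqb_refl. reflexivity. Qed.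

Lemma swap_r a b : swap a b b = a.
Proof.
  unfold swap. destruct (Nat.eqb_spec b a); [congruence | rewrite Nat.eqb_refl; reflexivity].
Qed.

Lemma swap_other a b v : v <> a -> v <> b -> swap a b v = v.
Proof. unfold swap. intros. destruct_eqbs; lia. Qed.

Lemma swap_lt a b m i : (a < m)%nat -> (b < m)%nat -> (i < m)%nat -> (swap a b i < m)%nat.
Proof. unfold swap; intros; destruct (Nat.eqb_spec i a), (Nat.eqb_spec i b); lia. Qed.

Lemma avgn_antisym n a b F : (a < n)%nat -> (b < n)%nat -> depends_below n F ->
  (forall X, F (fun i => X (swap a b i)) = - F X) -> avgn L n F = 0.
Proof.
  intros Ha Hb HF Hanti.
  assert (E : avgn L n (fun X => F (fun i => X (swap a b i))) = avgn L n F).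
  { apply avgn_relabel; auto.
    - intros; apply swap_lt; auto.
    - intros i j _ _ E. rewrite <- (swap_invol a b i), <- (swap_invol a b j), E; auto. }
  rewrite (avgn_ext _ _ (fun X => - F X)), avgn_opp in E by auto. lra.
Qed.

End FiniteAverages.

(** * Symmetries of the crossing sign *)

Definition crossing_sign (D t t' z : R) : R :=
  if Req_EM_T D 0 then 0 else
  if in01 t && in01 t' then rsign D * rsign z else 0.

Lemma eps_unfold (ax ay az bx by_ bz px py pz qx qy qz : R) :
  eps (ax, ay, az) (bx, by_, bz) (px, py, pz) (qx, qy, qz) =
  let D := cross2 (bx - ax) (by_ - ay) (qx - px) (qy - py) in
  let t := cross2 (px - ax) (py - ay) (qx - px) (qy - py) / D in
  let t' := cross2 (px - ax) (py - ay) (bx - ax) (by_ - ay) / D in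
  crossing_sign D t t' ((az + t * (bz - az)) - (pz + t' * (qz - pz))).
Proof. reflexivity. Qed.

Lemma rsign_opp x : rsign (- x) = - rsign x.
Proof.
  unfold rsign.
  destruct (Rlt_dec 0 x), (Rlt_dec 0 (-x)), (Rlt_dec x 0), (Rlt_dec (-x) 0); lra.
Qed.

Lemma in01_1m t : in01 (1 - t) = in01 t.
Proof.
  unfold in01.
  destruct (Rlt_dec 0 t), (Rlt_dec t 1), (Rlt_dec 0 (1 - t)), (Rlt_dec (1 - t) 1);
  lra || reflexivity.
Qed.

(* Reversing [P -> Q] negates the determinant and maps the crossing parameter
   [t'] on [PQ] to [1 - t'], leaving the crossing point itself unchanged. *)
Lemma eps_rev_r A B P Q : eps A B Q P = - eps A B P Q.
Proof.
  destruct A as [[ax ay] az], B as [[bx by_] bz], P as [[px py] pz], Q as [[qx qy] qz].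
  rewrite !eps_unfold. cbv zeta. unfold crossing_sign, cross2.
  set (D := (bx - ax) * (qy - py) - (by_ - ay) * (qx - px)).
  replace ((bx - ax) * (py - qy) - (by_ - ay) * (px - qx)) with (- D) by (unfold D; ring).
  destruct (Req_EM_T D 0) as [e|e]; destruct (Req_EM_T (- D) 0) as [e'|e']; try lra.
  set (t := ((px - ax) * (qy - py) - (py - ay) * (qx - px)) / D).
  set (t' := ((px - ax) * (by_ - ay) - (py - ay) * (bx - ax)) / D).
  replace (((qx - ax) * (py - qy) - (qy - ay) * (px - qx)) / - D) with t
    by (unfold t; field; auto).
  replace (((qx - ax) * (by_ - ay) - (qy - ay) * (bx - ax)) / - D) with (1 - t')
    by (unfold t', D; field; auto).
  rewrite in01_1m. destruct (in01 t && in01 t'); [|ring].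
  rewrite rsign_opp.
  replace (az + t * (bz - az) - (qz + (1 - t') * (pz - qz)))
    with (az + t * (bz - az) - (pz + t' * (qz - pz))) by ring.
  ring.
Qed.

Lemma eps_comm A B P Q : eps P Q A B = eps A B P Q.
Proof.
  destruct A as [[ax ay] az], B as [[bx by_] bz], P as [[px py] pz], Q as [[qx qy] qz].
  rewrite !eps_unfold. cbv zeta. unfold crossing_sign, cross2.
  set (D := (bx - ax) * (qy - py) - (by_ - ay) * (qx - px)).
  replace ((qx - px) * (by_ - ay) - (qy - py) * (bx - ax)) with (- D) by (unfold D; ring).
  destruct (Req_EM_T D 0) as [e|e]; destruct (Req_EM_T (- D) 0) as [e'|e']; try lra.
  set (t := ((px - ax) * (qy - py) - (py - ay) * (qx - px)) / D).
  set (t' := ((px - ax) * (by_ - ay) - (py - ay) * (bx - ax)) / D).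
  replace (((ax - px) * (by_ - ay) - (ay - py) * (bx - ax)) / - D) with t'
    by (unfold t'; field; auto).
  replace (((ax - px) * (qy - py) - (ay - py) * (qx - px)) / - D) with t
    by (unfold t; field; auto).
  rewrite andb_comm. destruct (in01 t && in01 t'); [|ring].
  replace (pz + t' * (qz - pz) - (az + t * (bz - az)))
    with (- (az + t * (bz - az) - (pz + t' * (qz - pz)))) by ring.
  rewrite !rsign_opp. ring.
Qed.

Lemma eps_rev_l A B P Q : eps B A P Q = - eps A B P Q.
Proof. rewrite <- (eps_comm A B), <- (eps_comm B A), eps_rev_r; reflexivity. Qed.

Lemma rsign_cases x : rsign x = 0 \/ rsign x = 1 \/ rsign x = -1.
Proof. unfold rsign; destruct (Rlt_dec 0 x), (Rlt_dec x 0); auto. Qed.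

Lemma eps_cases A B P Q : eps A B P Q = 0 \/ eps A B P Q = 1 \/ eps A B P Q = -1.
Proof.
  destruct A as [[ax ay] az], B as [[bx by_] bz], P as [[px py] pz], Q as [[qx qy] qz].
  rewrite eps_unfold; cbv zeta; unfold crossing_sign.
  destruct (Req_EM_T _ 0); auto. destruct (_ && _); auto.
  match goal with |- context [rsign ?D * rsign ?z] =>
    destruct (rsign_cases D) as [-> | [-> | ->]];
    destruct (rsign_cases z) as [-> | [-> | ->]] end; lra.
Qed.

Lemma eps_sq A B P Q :
  eps A B P Q * eps A B P Q = if Req_EM_T (eps A B P Q) 0 then 0 else 1.
Proof.
  destruct (Req_EM_T (eps A B P Q) 0) as [->|Hne]; [ring|].
  destruct (eps_cases A B P Q) as [|[-> | ->]]; [contradiction | ring | ring].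
Qed.

Definition grid_coord (N a : nat) : R := (2 * INR a + 1) / (2 * INR N).

Definition grid (N : nat) : list pt :=
  flat_map (fun a => flat_map (fun b =>
    map (fun c => (grid_coord N c, grid_coord N b, grid_coord N a)) (seq 0 N)) (seq 0 N))
  (seq 0 N).

Lemma grid_nonempty N : (0 < N)%nat -> grid N <> [].
Proof. intros H. destruct N; [lia|]. discriminate. Qed.

Lemma length_grid N : length (grid N) = (N * (N * N))%nat.
Proof.
  unfold grid. rewrite (flat_map_constant_length (c := (N * N)%nat)), length_seq; [reflexivity|].
  intros a _. rewrite (flat_map_constant_length (c := N)), length_seq; [reflexivity|].
  intros b _. rewrite length_map, length_seq. reflexivity.
Qed.

Lemma avg_grid N f : (0 < N)%nat -> avg (grid N) f =
  / INR N * rsum (fun a => / INR N * rsum (fun b => / INR N * rsum (fun c =>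
      f (grid_coord N c, grid_coord N b, grid_coord N a)) (seq 0 N)) (seq 0 N)) (seq 0 N).
Proof.
  intros HN. unfold avg.
  rewrite length_grid, !mult_INR, !Rinv_mult, !Rmult_assoc. f_equal.
  unfold grid. rewrite rsum_flat_map, <- !rsum_scal. apply rsum_ext; intro a. f_equal.
  rewrite rsum_flat_map, <- rsum_scal. apply rsum_ext; intro b.
  rewrite rsum_map. reflexivity.
Qed.

Lemma gavg_ext N m : forall F G, (forall x, F x = G x) -> gavg N m F = gavg N m G.
Proof.
  induction m; intros F G H; simpl; auto.
  f_equal. apply rsum_ext; intro a. apply IHm; auto.
Qed.

(* Drawing point [k] of [ptE] means drawing coordinates [3k], [3k+1], [3k+2]
   of [gavg], which are exactly the three outermost ones. *)
Lemma ptE_avgn_grid N k G : (0 < N)%nat -> ptE N k G = avgn (grid N) k G.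
Proof.
  intros HN. unfold ptE. revert G. induction k as [|k IH]; intro G; [reflexivity|].
  replace (3 * S k)%nat with (S (S (S (3 * k)))) by lia.
  cbn [avgn gavg]. rewrite avg_grid by auto.
  f_equal. apply rsum_ext; intro a. f_equal. apply rsum_ext; intro b. f_equal.
  apply rsum_ext; intro c.
  rewrite <- IH. apply gavg_ext; intro x. f_equal.
  apply functional_extensionality; intro i. unfold vpos, upd.
  destruct (Nat.eqb_spec i k); destruct_eqbs; try lia; reflexivity.
Qed.

(** * Counting cycles *)

Definition indic (b : bool) : R := if b then 1 else 0.

Definition count_lt (n : nat) (q : nat -> bool) : R := rsum (fun i => indic (q i)) (seq 0 n).

Fixpoint falling (x : R) (k : nat) : R :=
  match k with O => 1 | S k => x * falling (x - 1) k end.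

Lemma indic_andb a b : indic (a && b) = indic a * indic b.
Proof. destruct a, b; unfold indic; simpl; ring. Qed.

Lemma in_words n k w : In w (words n k) -> length w = k /\ (forall x, In x w -> (x < n)%nat).
Proof.
  revert w; induction k as [|k IH]; intros w H; simpl in H.
  - destruct H as [<-|[]]. split; [reflexivity | intros _ []].
  - apply in_flat_map in H as [w' [Hw' H]]. apply in_map_iff in H as [i [<- Hi]].
    apply IH in Hw' as [Hl Hx]. apply in_seq in Hi.
    split; [simpl; lia | intros x [<-|Hx']; [lia | auto]].
Qed.

Lemma rsum_words_S n k f : rsum f (words n (S k)) =
  rsum (fun i => rsum (fun w => f (i :: w)) (words n k)) (seq 0 n).
Proof.
  simpl. rewrite rsum_flat_map, <- rsum_exch. apply rsum_ext; intro w.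
  rewrite rsum_map. reflexivity.
Qed.

Lemma rsum_words_S_snoc n k : forall f, rsum f (words n (S k)) =
  rsum (fun i => rsum (fun w => f (w ++ [i])) (words n k)) (seq 0 n).
Proof.
  induction k as [|k IH]; intro f; rewrite rsum_words_S; [reflexivity|].
  rewrite (rsum_ext _ (fun i => rsum (fun j => rsum (fun w => f (i :: w ++ [j]))
                                                    (words n k)) (seq 0 n)))
    by (intro i; apply (IH (fun w => f (i :: w)))).
  rewrite rsum_exch. apply rsum_ext; intro j.
  rewrite (rsum_words_S n k (fun w => f (w ++ [j]))). reflexivity.
Qed.

Lemma rsum_words_rev n k : forall f, rsum f (words n k) = rsum (fun w => f (rev w)) (words n k).
Proof.
  induction k as [|k IH]; intro f; [reflexivity|].
  rewrite rsum_words_S_snoc, rsum_words_S. apply rsum_ext; intro i.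
  rewrite (IH (fun w => f (w ++ [i]))). reflexivity.
Qed.

Lemma notin_spec v l : negb (existsb (Nat.eqb v) l) = true <-> ~ In v l.
Proof.
  rewrite negb_true_iff, <- not_true_iff_false, existsb_exists.
  split; intros H Hin; apply H.
  - exists v; split; [exact Hin | apply Nat.eqb_refl].
  - destruct Hin as [x [Hx E]]. apply Nat.eqb_eq in E; subst. exact Hx.
Qed.

Lemma nodupb_spec l : nodupb l = true <-> NoDup l.
Proof.
  induction l as [|a l IH]; simpl; [split; constructor|].
  rewrite andb_true_iff, notin_spec, IH, NoDup_cons_iff. reflexivity.
Qed.

Lemma nodupb_rev l : nodupb (rev l) = nodupb l.
Proof.
  apply eq_true_iff_eq. rewrite !nodupb_spec.
  split; [intro H; rewrite <- (rev_involutive l) | ]; apply NoDup_rev; auto.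
Qed.

Lemma forallb_rev {A} (f : A -> bool) l : forallb f (rev l) = forallb f l.
Proof.
  induction l; simpl; auto.
  rewrite forallb_app, IHl. simpl. destruct (f a), (forallb f l); reflexivity.
Qed.

Lemma count_lt_remove n q i : (i < n)%nat ->
  count_lt n (fun v => q v && negb (Nat.eqb i v)) = count_lt n q - indic (q i).
Proof.
  intros Hi. unfold count_lt.
  rewrite (rsum_ext _ (fun v => indic (q v) - (if Nat.eqb v i then indic (q i) else 0))).
  - rewrite rsum_minus, rsum_seq_delta; auto.
  - intro v. rewrite (Nat.eqb_sym i v).
    destruct (Nat.eqb_spec v i) as [->|]; simpl;
    [rewrite andb_false_r | rewrite andb_true_r]; unfold indic; ring.
Qed.

Lemma count_injective_words n k : forall q,
  rsum (fun w => indic (nodupb w && forallb q w)) (words n k) = falling (count_lt n q) k.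
Proof.
  induction k as [|k IH]; intro q; [simpl; unfold indic; simpl; ring|].
  rewrite rsum_words_S.
  rewrite (rsum_ext_in _ (fun i => indic (q i) * falling (count_lt n q - 1) k)).
  - rewrite rsum_scal_r. reflexivity.
  - intros i Hi. apply in_seq in Hi.
    rewrite (rsum_ext _ (fun w => indic (q i) *
               indic (nodupb w && forallb (fun v => q v && negb (Nat.eqb i v)) w))).
    + rewrite rsum_scal, IH, count_lt_remove by lia.
      destruct (q i); unfold indic; simpl; ring.
    + intro w. rewrite <- indic_andb. f_equal. simpl.
      replace (forallb (fun v => q v && negb (Nat.eqb i v)) w)
        with (forallb q w && negb (existsb (Nat.eqb i) w)).
      * destruct (q i), (existsb (Nat.eqb i) w), (nodupb w), (forallb q w); reflexivity.
      * induction w as [|a w IHw]; simpl; auto. rewrite <- IHw.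
        destruct (q a), (Nat.eqb i a), (forallb q w), (existsb (Nat.eqb i) w); reflexivity.
Qed.

Lemma hd_rev (l : list nat) d : hd d (rev l) = last l d.
Proof.
  induction l using rev_ind; [reflexivity|].
  rewrite rev_app_distr, last_last. reflexivity.
Qed.

Lemma last_rev (l : list nat) d : last (rev l) d = hd d l.
Proof. rewrite <- hd_rev, rev_involutive. reflexivity. Qed.

Lemma hd_neq_last w : NoDup w -> (2 <= length w)%nat -> hd 0%nat w <> last w 0%nat.
Proof.
  destruct w as [|a w] using rev_ind; [simpl; lia|]. clear IHw.
  rewrite length_app, last_last. destruct w as [|b w]; [simpl; lia|].
  intros Hnd _ E. simpl in E, Hnd. subst b.
  apply NoDup_cons_iff in Hnd as [Hn _]. apply Hn, in_or_app. right; left; reflexivity.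
Qed.

(* Reversal exchanges [hd < last] and [last < hd]. *)
Lemma count_injective_words_hd_lt_last n k q : (2 <= k)%nat ->
  rsum (fun w => indic (nodupb w && forallb q w && Nat.ltb (hd 0%nat w) (last w 0%nat)))
    (words n k) = falling (count_lt n q) k / 2.
Proof.
  intros Hk.
  set (A := rsum _ _).
  set (B := rsum (fun w => indic (nodupb w && forallb q w && Nat.ltb (last w 0%nat) (hd 0%nat w)))
              (words n k)).
  assert (EAB : A = B).
  { unfold A. rewrite rsum_words_rev. apply rsum_ext; intro w.
    rewrite nodupb_rev, forallb_rev, hd_rev, last_rev. reflexivity. }
  assert (ES : A + B = falling (count_lt n q) k).
  { rewrite <- count_injective_words. unfold A, B. rewrite <- rsum_plus.
    apply rsum_ext_in; intros w Hw. apply in_words in Hw as [Hl _].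
    destruct (nodupb w) eqn:En; [|unfold indic; simpl; ring].
    pose proof (hd_neq_last w (proj1 (nodupb_spec w) En) ltac:(lia)).
    destruct (forallb q w); [|unfold indic; simpl; ring]. simpl.
    destruct (Nat.ltb_spec (hd 0%nat w) (last w 0%nat)),
             (Nat.ltb_spec (last w 0%nat) (hd 0%nat w)); unfold indic; try lia; ring. }
  lra.
Qed.

Lemma falling_S_r x m : falling x (S m) = falling x m * (x - INR m).
Proof.
  revert x; induction m as [|m IH]; intro x; [simpl; ring|].
  change (falling x (S (S m))) with (x * falling (x - 1) (S m)).
  rewrite IH, S_INR. simpl. ring.
Qed.

Lemma count_lt_S n q : count_lt (S n) q = indic (q 0%nat) + count_lt n (fun i => q (S i)).
Proof. unfold count_lt. rewrite <- cons_seq, rsum_cons, <- seq_shift, rsum_map. reflexivity. Qed.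

(* Hockey-stick identity [sum_j C(c_j, m) = C(c, m+1)], in falling-factorial
   form, where [c_j] counts the admissible vertices above the [j]-th one. *)
Lemma falling_hockey_stick n : forall q m,
  rsum (fun v0 => indic (q v0) * falling (count_lt n (fun v => q v && Nat.ltb v0 v)) m)
    (seq 0 n)
  = falling (count_lt n q) (S m) / INR (S m).
Proof.
  induction n as [|n IH]; intros q m.
  - assert (INR (S m) <> 0) by (apply not_0_INR; lia).
    unfold count_lt. simpl. field; auto.
  - rewrite <- cons_seq, rsum_cons, <- seq_shift, rsum_map.
    rewrite !count_lt_S. simpl Nat.ltb. rewrite andb_false_r.
    rewrite (rsum_ext _ (fun v => indic (q (S v)) *
               falling (count_lt n (fun i => q (S i) && Nat.ltb v i)) m))
      by (intro v; rewrite count_lt_S, andb_false_r; unfold indic at 2; rewrite Rplus_0_l;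
          reflexivity).
    rewrite IH.
    set (C := count_lt n (fun i => q (S i))).
    replace (count_lt n (fun i => q (S i) && Nat.ltb 0 (S i))) with C
      by (apply rsum_ext; intro i; rewrite andb_true_r; reflexivity).
    assert (INR (S m) <> 0) by (apply not_0_INR; lia).
    unfold indic; destruct (q 0%nat); [|rewrite Rplus_0_l; ring].
    change (falling (1 + C) (S m)) with ((1 + C) * falling (1 + C - 1) m).
    replace (1 + C - 1) with C by ring.
    rewrite Rplus_0_l, falling_S_r. rewrite S_INR in *. field; auto.
Qed.

Lemma forallb_andb {A} (f g : A -> bool) l :
  forallb (fun x => f x && g x) l = forallb f l && forallb g l.
Proof.
  induction l; simpl; auto. rewrite IHl.
  destruct (f a), (g a), (forallb f l), (forallb g l); reflexivity.
Qed.

Lemma canon_andb_forallb v0 w q : (2 <= length w)%nat ->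
  canon (v0 :: w) && forallb q (v0 :: w) =
  q v0 && (nodupb w && forallb (fun v => q v && Nat.ltb v0 v) w
           && Nat.ltb (hd 0%nat w) (last w 0%nat)).
Proof.
  intros Hl. destruct w as [|b w]; [simpl in Hl; lia|].
  unfold canon. replace (Nat.leb 3 (length (v0 :: b :: w))) with true
    by (symmetry; apply Nat.leb_le; simpl in *; lia).
  change (nodupb (v0 :: b :: w)) with (negb (existsb (Nat.eqb v0) (b :: w)) && nodupb (b :: w)).
  change (forallb q (v0 :: b :: w)) with (q v0 && forallb q (b :: w)).
  replace (forallb (fun v => q v && Nat.ltb v0 v) (b :: w))
    with (forallb q (b :: w) && forallb (fun v => Nat.ltb v0 v) (b :: w))
    by (rewrite forallb_andb; reflexivity).
  change (hd 0%nat (b :: w)) with b.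
  destruct (forallb (fun v => Nat.ltb v0 v) (b :: w)) eqn:E.
  - replace (negb (existsb (Nat.eqb v0) (b :: w))) with true.
    + destruct (q v0), (nodupb (b :: w)), (forallb q (b :: w)), (Nat.ltb b _); reflexivity.
    + symmetry. apply notin_spec. intro Hin. rewrite forallb_forall in E.
      apply E, Nat.ltb_lt in Hin. lia.
  - destruct (q v0), (negb _), (nodupb (b :: w)), (forallb q (b :: w)), (Nat.ltb b _);
    reflexivity.
Qed.

(* A canonical cycle word is its minimal vertex followed by an injective word
   on the larger vertices with [hd < last]. *)
Lemma count_canonical_words n l q : (3 <= l)%nat ->
  rsum (fun w => indic (canon w && forallb q w)) (words n l)
  = falling (count_lt n q) l / (2 * INR l).
Proof.
  intros Hl. destruct l as [|m]; [lia|].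
  rewrite rsum_words_S.
  rewrite (rsum_ext_in _ (fun v0 => indic (q v0) *
             falling (count_lt n (fun v => q v && Nat.ltb v0 v)) m * / 2)).
  - rewrite rsum_scal_r, falling_hockey_stick. field. apply not_0_INR; lia.
  - intros v0 _. rewrite Rmult_assoc.
    change (falling ?x m * / 2) with (falling x m / 2).
    rewrite <- count_injective_words_hd_lt_last, <- rsum_scal by lia.
    apply rsum_ext_in; intros w Hw. apply in_words in Hw as [Hw _].
    rewrite canon_andb_forallb, indic_andb by lia. reflexivity.
Qed.

Lemma canon_spec c : canon c = true -> NoDup c /\ (3 <= length c)%nat.
Proof.
  destruct c as [|a [|b l]]; try discriminate. unfold canon.
  rewrite !andb_true_iff, Nat.leb_le, nodupb_spec. tauto.
Qed.

Lemma in_cycles n c : In c (cycles n) -> canon c = true /\ (forall x, In x c -> (x < n)%nat).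
Proof.
  unfold cycles. intro H. apply in_flat_map in H as [k [_ H]].
  apply filter_In in H as [H Hc]. apply in_words in H as [_ Hx]. auto.
Qed.

Lemma rsum_cycles n f : rsum f (cycles n) =
  rsum (fun k => rsum (fun w => indic (canon w) * f w) (words n k)) (seq 3 (n - 2)).
Proof.
  unfold cycles. rewrite rsum_flat_map. apply rsum_ext; intro k.
  rewrite rsum_filter. apply rsum_ext; intro w. destruct (canon w); unfold indic; ring.
Qed.

Lemma disjointb_spec c w : disjointb c w = true <-> (forall v, In v c -> ~ In v w).
Proof.
  unfold disjointb. rewrite forallb_forall.
  split; intros H v Hv; apply notin_spec; auto.
Qed.

Lemma disjointb_comm c w : disjointb c w = disjointb w c.
Proof.
  apply eq_true_iff_eq. rewrite !disjointb_spec.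
  split; intros H v Hv Hv'; eapply H; eauto.
Qed.

Lemma count_lt_in n c : NoDup c -> (forall x, In x c -> (x < n)%nat) ->
  count_lt n (fun v => existsb (Nat.eqb v) c) = INR (length c).
Proof.
  induction c as [|a c IH]; intros Hnd Hx.
  - unfold count_lt, indic. simpl. apply rsum_zero.
  - apply NoDup_cons_iff in Hnd as [Ha Hnd]. unfold count_lt in *.
    rewrite (rsum_ext _ (fun v => (if Nat.eqb v a then 1 else 0)
                                  + indic (existsb (Nat.eqb v) c))).
    + rewrite rsum_plus, rsum_seq_delta, IH by (simpl in Hx; auto).
      cbn [length]. rewrite S_INR; ring.
    + intro v. simpl existsb. destruct (Nat.eqb_spec v a) as [->|]; simpl; [|ring].
      replace (existsb (Nat.eqb a) c) with false by (symmetry; apply negb_true_iff, notin_spec, Ha).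
      unfold indic; ring.
Qed.

Lemma count_lt_notin n c : NoDup c -> (forall x, In x c -> (x < n)%nat) ->
  count_lt n (fun v => negb (existsb (Nat.eqb v) c)) = INR n - INR (length c).
Proof.
  intros Hnd Hx. rewrite <- (count_lt_in n c Hnd Hx). unfold count_lt.
  rewrite (rsum_ext _ (fun v => 1 - indic (existsb (Nat.eqb v) c))).
  - rewrite rsum_minus, rsum_const, length_seq; ring.
  - intro v; destruct (existsb (Nat.eqb v) c); unfold indic; simpl; ring.
Qed.

Lemma sum_length_disjoint_cycles n c : NoDup c -> (forall x, In x c -> (x < n)%nat) ->
  rsum (fun c' => indic (disjointb c c') * INR (length c')) (cycles n) =
  rsum (fun l => falling (INR n - INR (length c)) l / 2) (seq 3 (n - 2)).
Proof.
  intros Hnd Hx. rewrite rsum_cycles. apply rsum_ext_in; intros l Hl. apply in_seq in Hl.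
  rewrite (rsum_ext_in _ (fun w => INR l *
             indic (canon w && forallb (fun v => negb (existsb (Nat.eqb v) c)) w))).
  - rewrite rsum_scal, count_canonical_words, count_lt_notin by (auto; lia).
    field. apply not_0_INR; lia.
  - intros w Hw. apply in_words in Hw as [Hw _].
    rewrite Hw, disjointb_comm, indic_andb. unfold disjointb. ring.
Qed.

Lemma sum_length_disjoint_cycle_pairs n :
  rsum (fun c => rsum (fun c' => indic (disjointb c c') * (INR (length c) * INR (length c')))
                   (cycles n)) (cycles n) =
  rsum (fun k => rsum (fun l => falling (INR n) k * falling (INR n - INR k) l / 4)
                   (seq 3 (n - 2))) (seq 3 (n - 2)).
Proof.
  rewrite rsum_cycles. apply rsum_ext_in; intros k Hk. apply in_seq in Hk.
  rewrite (rsum_ext_in _ (fun w => INR k *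
             rsum (fun l => falling (INR n - INR k) l / 2) (seq 3 (n - 2))
             * indic (canon w && forallb (fun _ => true) w))).
  - rewrite rsum_scal, count_canonical_words by lia.
    replace (count_lt n (fun _ => true)) with (INR n)
      by (unfold count_lt, indic; rewrite rsum_const, length_seq; ring).
    rewrite <- rsum_scal, <- rsum_scal_r. apply rsum_ext; intro l.
    field. apply not_0_INR; lia.
  - intros w Hw. apply in_words in Hw as [Hl Hx].
    replace (forallb (fun _ => true) w) with true by (symmetry; apply forallb_forall; auto).
    rewrite andb_true_r.
    destruct (canon w) eqn:Ec; [|unfold indic; ring].
    apply canon_spec in Ec as [Hnd _].
    rewrite (rsum_ext _ (fun c' => INR (length w) * (indic (disjointb w c') * INR (length c'))))
      by (intros; ring).
    rewrite rsum_scal, sum_length_disjoint_cycles, Hl by auto. unfold indic; ring.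
Qed.

(* Each unordered pair appears twice among the ordered ones, and [cycle_pairs]
   keeps the order in which the minimal vertices increase. *)
Lemma sum_cycle_pairs_lengths n :
  rsum (fun p => INR (length (fst p)) * INR (length (snd p))) (cycle_pairs n) =
  / 2 * rsum (fun c => rsum (fun c' =>
          indic (disjointb c c') * (INR (length c) * INR (length c'))) (cycles n)) (cycles n).
Proof.
  unfold cycle_pairs. rewrite rsum_filter, rsum_list_prod. simpl fst; simpl snd.
  set (f := fun x y : list nat => INR (length x) * INR (length y)).
  set (P := rsum (fun x => rsum (fun y =>
              if disjointb x y && Nat.ltb (hd 0%nat x) (hd 0%nat y) then f x y else 0)
              (cycles n)) (cycles n)).
  set (P' := rsum (fun x => rsum (fun y =>
              if disjointb x y && Nat.ltb (hd 0%nat y) (hd 0%nat x) then f x y else 0)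
              (cycles n)) (cycles n)).
  assert (E1 : P = P').
  { unfold P, P'. rewrite rsum_exch. apply rsum_ext; intro x. apply rsum_ext; intro y.
    rewrite disjointb_comm. unfold f. destruct (_ && _); ring. }
  assert (E2 : P + P' = rsum (fun c => rsum (fun c' => indic (disjointb c c') * f c c')
                                        (cycles n)) (cycles n)).
  { unfold P, P'. rewrite <- rsum_plus. apply rsum_ext_in; intros x Hx.
    rewrite <- rsum_plus. apply rsum_ext_in; intros y Hy.
    apply in_cycles in Hx as [Hx _]. apply canon_spec in Hx as [_ Hx].
    apply in_cycles in Hy as [Hy _]. apply canon_spec in Hy as [_ Hy].
    destruct (disjointb x y) eqn:Ed; [|unfold indic; simpl; ring].
    assert (hd 0%nat x <> hd 0%nat y).
    { rewrite disjointb_spec in Ed.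
      destruct x as [|a x]; [simpl in Hx; lia|]. destruct y as [|b y]; [simpl in Hy; lia|].
      simpl. intros ->. apply (Ed b); left; reflexivity. }
    unfold indic; simpl.
    destruct (Nat.ltb_spec (hd 0%nat x) (hd 0%nat y)),
             (Nat.ltb_spec (hd 0%nat y) (hd 0%nat x)); try lia; ring. }
  change (P = / 2 * rsum (fun c => rsum (fun c' => indic (disjointb c c') * f c c')
                                   (cycles n)) (cycles n)).
  rewrite <- E2. lra.
Qed.

Lemma falling_add x k : forall l, falling x (k + l) = falling x k * falling (x - INR k) l.
Proof.
  revert x; induction k as [|k IH]; intros x l.
  - simpl. replace (x - 0) with x by ring. ring.
  - change (falling x (S k + l)) with (x * falling (x - 1) (k + l)).
    rewrite IH, S_INR. simpl. replace (x - 1 - INR k) with (x - (INR k + 1)) by ring. ring.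
Qed.

Lemma falling_INR_gt n : forall j, (n < j)%nat -> falling (INR n) j = 0.
Proof.
  induction n as [|n IH]; intros j H; destruct j as [|j]; try lia; [simpl; ring|].
  change (falling (INR (S n)) (S j)) with (INR (S n) * falling (INR (S n) - 1) j).
  rewrite S_INR. replace (INR n + 1 - 1) with (INR n) by ring. rewrite IH by lia. ring.
Qed.

Lemma falling_INR_fact j : forall n, (j <= n)%nat ->
  falling (INR n) j = INR (fact n) / INR (fact (n - j)).
Proof.
  induction j as [|j IH]; intros n H.
  - simpl. rewrite Nat.sub_0_r. field. apply INR_fact_neq_0.
  - destruct n as [|n]; [lia|].
    change (falling (INR (S n)) (S j)) with (INR (S n) * falling (INR (S n) - 1) j).
    replace (INR (S n) - 1) with (INR n) by (rewrite S_INR; ring).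
    rewrite IH by lia. simpl (S n - S j)%nat. rewrite fact_simpl, mult_INR.
    field. apply INR_fact_neq_0.
Qed.

(* Terms with [k + l > n] vanish, which trims both ranges. *)
Lemma sum_falling_products n : (6 <= n)%nat ->
  rsum (fun k => rsum (fun l => falling (INR n) k * falling (INR n - INR k) l)
                   (seq 3 (n - 2))) (seq 3 (n - 2)) =
  rsum (fun k => rsum (fun l => INR (fact n) / INR (fact (n - k - l)))
                   (seq 3 (n - k - 2))) (seq 3 (n - 5)).
Proof.
  intros Hn.
  assert (split_range : forall F : nat -> R,
    rsum F (seq 3 (n - 2)) = rsum F (seq 3 (n - 5) ++ seq (3 + (n - 5)) 3))
    by (intro; rewrite <- seq_app; do 2 f_equal; lia).
  rewrite split_range, rsum_app,
    (rsum_ext_in _ (fun _ => 0) (seq (3 + (n - 5)) 3)), rsum_zero, Rplus_0_r.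
  - apply rsum_ext_in; intros k Hk. apply in_seq in Hk.
    replace (n - 2)%nat with ((n - k - 2) + k)%nat by lia.
    rewrite seq_app, rsum_app,
      (rsum_ext_in _ (fun _ => 0) (seq (3 + (n - k - 2)) k)), rsum_zero, Rplus_0_r.
    + apply rsum_ext_in; intros l Hl. apply in_seq in Hl.
      rewrite <- falling_add, falling_INR_fact, Nat.sub_add_distr by lia. reflexivity.
    + intros l Hl. apply in_seq in Hl. rewrite <- falling_add. apply falling_INR_gt; lia.
  - intros k Hk. apply in_seq in Hk. rewrite <- (rsum_zero (seq 3 (n - 2))).
    apply rsum_ext_in; intros l Hl. apply in_seq in Hl.
    rewrite <- falling_add. apply falling_INR_gt; lia.
Qed.

Lemma rsum_antidiagonal m (g : nat -> R) :
  rsum (fun k => rsum (fun l => g (k + l)%nat) (seq 3 (m + 3 - k))) (seq 3 m) =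
  rsum (fun i => g i * INR (i - 5)) (seq 6 m).
Proof.
  induction m as [|m IH]; [reflexivity|].
  rewrite !seq_S, !rsum_app, <- IH.
  rewrite (rsum_ext_in _ (fun k => rsum (fun l => g (k + l)%nat) (seq 3 (m + 3 - k))
                                   + g (m + 6)%nat) (seq 3 m)).
  - rewrite rsum_plus, rsum_const, length_seq, Rplus_assoc. f_equal.
    rewrite !rsum_cons. cbv beta.
    replace (S m + 3 - (3 + m))%nat with 1%nat by lia.
    replace (6 + m - 5)%nat with (S m) by lia.
    rewrite S_INR. simpl. replace (S (S (S (m + 3))))%nat with (m + 6)%nat by lia.
    replace (S (S (S (S (S (S m))))))%nat with (m + 6)%nat by lia.
    ring.
  - intros k Hk. apply in_seq in Hk.
    replace (S m + 3 - k)%nat with (S (m + 3 - k)) by lia.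
    rewrite seq_S, rsum_app. simpl.
    replace (k + S (S (S (m + 3 - k))))%nat with (m + 6)%nat by lia. ring.
Qed.

Lemma double_sum_fact_antidiagonal n : (6 <= n)%nat ->
  rsum (fun k => rsum (fun l => INR (fact n) / INR (fact (n - k - l)))
                   (seq 3 (n - k - 2))) (seq 3 (n - 5)) =
  rsum (fun i => INR (fact n) / INR (fact (n - i)) * INR (i - 5)) (seq 6 (n - 5)).
Proof.
  intros Hn. rewrite <- (rsum_antidiagonal (n - 5) (fun i => INR (fact n) / INR (fact (n - i)))).
  apply rsum_ext_in; intros k Hk. apply in_seq in Hk.
  replace (n - 5 + 3 - k)%nat with (n - k - 2)%nat by lia.
  apply rsum_ext; intro l. rewrite Nat.sub_add_distr. reflexivity.
Qed.

(** * Mean squared linking number of two disjoint cycles *)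

Definition cnext (k i : nat) : nat := if Nat.eqb (S i) k then 0%nat else S i.
Definition cprev (k i : nat) : nat := if Nat.eqb i 0 then (k - 1)%nat else (i - 1)%nat.

Lemma cnext_lt k i : (i < k)%nat -> (cnext k i < k)%nat.
Proof. unfold cnext; destruct (Nat.eqb_spec (S i) k); lia. Qed.

Lemma cnext_neq k i : (2 <= k)%nat -> (i < k)%nat -> cnext k i <> i.
Proof. unfold cnext; destruct (Nat.eqb_spec (S i) k); lia. Qed.

Lemma cnext_cnext_neq k i : (3 <= k)%nat -> (i < k)%nat -> cnext k (cnext k i) <> i.
Proof. intros. unfold cnext; destruct (Nat.eqb_spec (S i) k); destruct_eqbs; lia. Qed.

Lemma cnext_inj k i j : (i < k)%nat -> (j < k)%nat -> cnext k i = cnext k j -> i = j.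
Proof. unfold cnext; destruct (Nat.eqb_spec (S i) k), (Nat.eqb_spec (S j) k); lia. Qed.

Inductive edge_position := Same | Next | Prev | Apart.

(* Edge [i] of a cycle of length [k] joins its [i]-th vertex to its [cnext k i]-th. *)
Definition edge_position_of (k i j : nat) : edge_position :=
  if Nat.eqb i j then Same else if Nat.eqb j (cnext k i) then Next
  else if Nat.eqb i (cnext k j) then Prev else Apart.

Lemma edge_position_of_spec k i j :
  match edge_position_of k i j with
  | Same => j = i
  | Next => j = cnext k i
  | Prev => i = cnext k j
  | Apart => i <> j /\ j <> cnext k i /\ i <> cnext k j
  end.
Proof. unfold edge_position_of. destruct_eqbs; auto. Qed.

Lemma rsum_edge_position k i (h : edge_position -> R) : (3 <= k)%nat -> (i < k)%nat ->
  h Apart = 0 ->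
  rsum (fun j => h (edge_position_of k i j)) (seq 0 k) = h Same + h Next + h Prev.
Proof.
  intros Hk Hi Hapart.
  rewrite (rsum_ext_in _ (fun j => (if Nat.eqb j i then h Same else 0)
                                 + (if Nat.eqb j (cnext k i) then h Next else 0)
                                 + (if Nat.eqb j (cprev k i) then h Prev else 0))).
  - rewrite !rsum_plus, !rsum_seq_delta; auto using cnext_lt.
    unfold cprev; destruct (Nat.eqb_spec i 0); lia.
  - intros j Hj. apply in_seq in Hj. unfold edge_position_of, cnext, cprev.
    destruct (Nat.eqb_spec (S i) k), (Nat.eqb_spec (S j) k), (Nat.eqb_spec i 0);
    destruct_eqbs; try lia; rewrite ?Hapart; ring.
Qed.

Definition cross_term (c c' : list nat) (i i' : nat) (X : nat -> pt) : R :=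
  eps (X (nth i c 0%nat)) (X (nth (cnext (length c) i) c 0%nat))
      (X (nth i' c' 0%nat)) (X (nth (cnext (length c') i') c' 0%nat)).

Lemma combine_nth_seq (l1 l2 : list nat) : length l1 = length l2 ->
  combine l1 l2 = map (fun i => (nth i l1 0%nat, nth i l2 0%nat)) (seq 0 (length l1)).
Proof.
  revert l2; induction l1 as [|a l1 IH]; intros [|b l2] H; try discriminate; [reflexivity|].
  simpl in H. cbn [combine length]. rewrite IH by lia.
  rewrite <- cons_seq; cbn [map]; rewrite <- seq_shift, map_map. reflexivity.
Qed.

Lemma cyc_edges_nth c : c <> [] ->
  cyc_edges c = map (fun i => (nth i c 0%nat, nth (cnext (length c) i) c 0%nat))
                    (seq 0 (length c)).
Proof.
  intros Hc. destruct c as [|a r]; [congruence|]. unfold cyc_edges. cbn [tl firstn].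
  rewrite combine_nth_seq by (simpl; rewrite length_app; simpl; lia).
  apply map_ext_in. intros i Hi. apply in_seq in Hi. cbn [length] in *. f_equal.
  unfold cnext. destruct (Nat.eqb_spec (S i) (S (length r))).
  - replace i with (length r) by lia. rewrite app_nth2, Nat.sub_diag by lia. reflexivity.
  - rewrite app_nth1 by lia. reflexivity.
Qed.

Lemma lk_cross_terms X c c' : c <> [] -> c' <> [] ->
  lk X c c' = / 2 * rsum (fun i => rsum (fun i' => cross_term c c' i i' X)
                                        (seq 0 (length c'))) (seq 0 (length c)).
Proof.
  intros Hc Hc'. unfold lk. rewrite !cyc_edges_nth, rsum_map by auto. f_equal.
  apply rsum_ext; intro i. rewrite rsum_map. reflexivity.
Qed.

Lemma lk_sq_cross_terms X c c' : c <> [] -> c' <> [] ->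
  lk X c c' ^ 2 = / 4 * rsum (fun i => rsum (fun j => rsum (fun i' => rsum (fun j' =>
      cross_term c c' i i' X * cross_term c c' j j' X)
      (seq 0 (length c'))) (seq 0 (length c'))) (seq 0 (length c))) (seq 0 (length c)).
Proof.
  intros Hc Hc'. rewrite lk_cross_terms by auto.
  set (T := rsum _ _). replace ((/ 2 * T) ^ 2) with (/ 4 * (T * T)) by (simpl; field).
  unfold T. rewrite rsum_mult. f_equal. apply rsum_ext; intro i.
  apply rsum_ext; intro j. apply rsum_mult.
Qed.

Definition s_integrand (Y : nat -> pt) : R :=
  if Req_EM_T (eps (Y 0%nat) (Y 1%nat) (Y 2%nat) (Y 3%nat)) 0 then 0 else 1.
Definition u_integrand (Y : nat -> pt) : R :=
  eps (Y 0%nat) (Y 1%nat) (Y 2%nat) (Y 3%nat) * eps (Y 0%nat) (Y 1%nat) (Y 3%nat) (Y 4%nat).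
Definition v_integrand (Y : nat -> pt) : R :=
  eps (Y 0%nat) (Y 1%nat) (Y 3%nat) (Y 4%nat) * eps (Y 1%nat) (Y 2%nat) (Y 4%nat) (Y 5%nat).

Lemma s_integrand_depends : depends_below 4 s_integrand.
Proof. intros Y Y' H. unfold s_integrand. rewrite !H by lia. reflexivity. Qed.
Lemma u_integrand_depends : depends_below 5 u_integrand.
Proof. intros Y Y' H. unfold u_integrand. rewrite !H by lia. reflexivity. Qed.
Lemma v_integrand_depends : depends_below 6 v_integrand.
Proof. intros Y Y' H. unfold v_integrand. rewrite !H by lia. reflexivity. Qed.

(* Mean of [cross_term i i' * cross_term j j'] in terms of the positions of
   edge [j] relative to edge [i] and of edge [j'] relative to edge [i'];
   [s2] stands for 2s. *)
Definition pattern_mean (s2 u v : R) (a b : edge_position) : R :=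
  match a, b with
  | Apart, _ | _, Apart => 0
  | Same, Same => s2
  | Same, _ | _, Same => u
  | _, _ => v
  end.

Lemma sum_pattern_means k l s2 u v : (3 <= k)%nat -> (3 <= l)%nat ->
  rsum (fun i => rsum (fun j => rsum (fun i' => rsum (fun j' =>
    pattern_mean s2 u v (edge_position_of k i j) (edge_position_of l i' j'))
    (seq 0 l)) (seq 0 l)) (seq 0 k)) (seq 0 k)
  = INR k * INR l * (s2 + 4 * u + 4 * v).
Proof.
  intros Hk Hl.
  rewrite (rsum_ext_in _ (fun _ => INR l * (s2 + 4 * u + 4 * v))), rsum_const, length_seq;
    [ring|].
  intros i Hi. apply in_seq in Hi.
  rewrite (rsum_ext_in _ (fun j => INR l * (pattern_mean s2 u v (edge_position_of k i j) Same
           + pattern_mean s2 u v (edge_position_of k i j) Next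
           + pattern_mean s2 u v (edge_position_of k i j) Prev))).
  - rewrite rsum_scal, (rsum_edge_position k i (fun a => pattern_mean s2 u v a Same
        + pattern_mean s2 u v a Next + pattern_mean s2 u v a Prev)) by (simpl; lra || lia).
    simpl. ring.
  - intros j _. rewrite (rsum_ext_in _ (fun _ => pattern_mean s2 u v (edge_position_of k i j) Same
           + pattern_mean s2 u v (edge_position_of k i j) Next
           + pattern_mean s2 u v (edge_position_of k i j) Prev)), rsum_const, length_seq;
      [reflexivity|].
    intros i' Hi'. apply in_seq in Hi'. apply rsum_edge_position; auto; try lia.
    destruct (edge_position_of k i j); reflexivity.
Qed.

Lemma NoDup_map_nth (c I : list nat) : NoDup c -> NoDup I ->
  (forall t, In t I -> (t < length c)%nat) -> NoDup (map (fun t => nth t c 0%nat) I).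
Proof.
  intros Hc HI HIc. apply NoDup_map_NoDup_ForallPairs; auto.
  intros a b Ha Hb E. apply (proj1 (NoDup_nth c 0%nat) Hc); auto.
Qed.

Lemma nth_neq_of_NoDup (c : list nat) a b : NoDup c ->
  (a < length c)%nat -> (b < length c)%nat -> a <> b -> nth a c 0%nat <> nth b c 0%nat.
Proof. intros Hc Ha Hb Hab E. apply Hab, (proj1 (NoDup_nth c 0%nat) Hc); auto. Qed.

Lemma avgn_relabel_two_cycles L n c c' I1 I2 m G F : L <> [] ->
  NoDup c -> NoDup c' -> (forall v, In v c -> ~ In v c') ->
  (forall v, In v c -> (v < n)%nat) -> (forall v, In v c' -> (v < n)%nat) ->
  NoDup I1 -> NoDup I2 ->
  (forall t, In t I1 -> (t < length c)%nat) -> (forall t, In t I2 -> (t < length c')%nat) ->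
  (length I1 + length I2 = m)%nat -> depends_below m G ->
  (forall X, F X = G (fun t => X (nth t (map (fun t => nth t c 0%nat) I1
                                         ++ map (fun t => nth t c' 0%nat) I2) 0%nat))) ->
  avgn L n F = avgn L m G.
Proof.
  intros HL Hc Hc' Hdisj Hcn Hc'n HI1 HI2 HI1c HI2c Hm HG HF. subst m.
  rewrite (avgn_ext _ _ _ _ HF), avgn_relabel_list, length_app, !length_map; auto.
  - apply NoDup_app; try apply NoDup_map_nth; auto.
    intros v Hv Hv'. apply in_map_iff in Hv as [a [<- Ha]]. apply in_map_iff in Hv' as [b [Eb Hb]].
    apply (Hdisj (nth a c 0%nat)); [apply nth_In | rewrite <- Eb; apply nth_In]; auto.
  - intros v Hv. apply in_app_or in Hv as [Hv|Hv]; apply in_map_iff in Hv as [t [<- Ht]];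
    [apply Hcn | apply Hc'n]; apply nth_In; auto.
  - rewrite length_app, !length_map. exact HG.
Qed.

Section CyclePair.

Variables (L : list pt) (n : nat) (c c' : list nat).
Hypothesis L_nonempty : L <> [].
Hypotheses (c_nodup : NoDup c) (c'_nodup : NoDup c').
Hypothesis cycles_disjoint : forall v, In v c -> ~ In v c'.
Hypotheses (c_bound : forall v, In v c -> (v < n)%nat)
           (c'_bound : forall v, In v c' -> (v < n)%nat).
Hypotheses (c_long : (3 <= length c)%nat) (c'_long : (3 <= length c')%nat).

Lemma cycles_disjoint_sym v : In v c' -> ~ In v c.
Proof. intros Hv Hv'. exact (cycles_disjoint v Hv' Hv). Qed.

Lemma nth_neq_of_disjoint a b : (a < length c)%nat -> (b < length c')%nat ->
  nth a c 0%nat <> nth b c' 0%nat.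
Proof.
  intros Ha Hb E. apply (cycles_disjoint (nth a c 0%nat)); [apply nth_In; auto|].
  rewrite E; apply nth_In; auto.
Qed.

Lemma cross_terms_depend i j i' j' :
  (i < length c)%nat -> (j < length c)%nat -> (i' < length c')%nat -> (j' < length c')%nat ->
  depends_below n (fun X => cross_term c c' i i' X * cross_term c c' j j' X).
Proof.
  intros Hi Hj Hi' Hj' Y Y' HY. unfold cross_term.
  rewrite !HY; auto;
  solve [apply c_bound, nth_In; auto using cnext_lt | apply c'_bound, nth_In; auto using cnext_lt].
Qed.

Ltac vertices_neq :=
  solve [ apply nth_neq_of_disjoint; auto using cnext_lt
        | apply not_eq_sym, nth_neq_of_disjoint; auto using cnext_lt
        | apply nth_neq_of_NoDup; auto using cnext_lt;
          first [lia | let E := fresh in intro E; apply cnext_inj in E; auto; lia] ].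

(* If edges [i] and [j] of [c] share no vertex, exchanging the endpoints of
   edge [i] changes the sign of the term; symmetrically on [c']. *)
Lemma mean_cross_terms_apart_l i j i' j' :
  (i < length c)%nat -> (j < length c)%nat -> (i' < length c')%nat -> (j' < length c')%nat ->
  edge_position_of (length c) i j = Apart ->
  avgn L n (fun X => cross_term c c' i i' X * cross_term c c' j j' X) = 0.
Proof.
  intros Hi Hj Hi' Hj' E. pose proof (edge_position_of_spec (length c) i j) as Hpos.
  rewrite E in Hpos. destruct Hpos as [Hij [Hji Hij']].
  apply (avgn_antisym L L_nonempty n (nth i c 0%nat) (nth (cnext (length c) i) c 0%nat));
    auto using cross_terms_depend; try (apply c_bound, nth_In; auto using cnext_lt).
  intro X. unfold cross_term. rewrite swap_l, swap_r, !swap_other by vertices_neq.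
  rewrite eps_rev_l. ring.
Qed.

Lemma mean_cross_terms_apart_r i j i' j' :
  (i < length c)%nat -> (j < length c)%nat -> (i' < length c')%nat -> (j' < length c')%nat ->
  edge_position_of (length c') i' j' = Apart ->
  avgn L n (fun X => cross_term c c' i i' X * cross_term c c' j j' X) = 0.
Proof.
  intros Hi Hj Hi' Hj' E. pose proof (edge_position_of_spec (length c') i' j') as Hpos.
  rewrite E in Hpos. destruct Hpos as [Hij [Hji Hij']].
  apply (avgn_antisym L L_nonempty n (nth i' c' 0%nat) (nth (cnext (length c') i') c' 0%nat));
    auto using cross_terms_depend; try (apply c'_bound, nth_In; auto using cnext_lt).
  intro X. unfold cross_term. rewrite swap_l, swap_r, !swap_other by vertices_neq.
  rewrite eps_rev_r. ring.
Qed.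

Lemma NoDup_pair (a b : nat) : a <> b -> NoDup [a; b].
Proof. intros. repeat constructor; simpl; intuition. Qed.

Lemma NoDup_triple (a b d : nat) : a <> b -> a <> d -> b <> d -> NoDup [a; b; d].
Proof. intros. repeat constructor; simpl; intuition. Qed.

Lemma eps_comm_prod A B C P Q : eps A B P Q * eps B C P Q = eps P Q A B * eps P Q B C.
Proof. rewrite (eps_comm A B P Q), (eps_comm B C P Q). reflexivity. Qed.

Lemma eps_rev_r_prod A B C P Q R : eps A B Q R * eps B C P Q = eps A B R Q * eps B C Q P.
Proof. rewrite (eps_rev_r A B R Q), (eps_rev_r B C Q P). ring. Qed.

Ltac index_neq :=
  first [ apply cnext_neq | apply not_eq_sym, cnext_neq
        | apply cnext_cnext_neq | apply not_eq_sym, cnext_cnext_neq ];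
  repeat apply cnext_lt; lia.

Ltac index_nodup := first [ apply NoDup_pair; index_neq | apply NoDup_triple; index_neq ].

Ltac index_bound :=
  let t := fresh "t" in let Ht := fresh "Ht" in intros t Ht;
  repeat (destruct Ht as [<-|Ht]; [repeat apply cnext_lt; lia|]); destruct Ht.

Ltac relabel_with c1 c2 I1 I2 :=
  apply (avgn_relabel_two_cycles L n c1 c2 I1 I2);
  first [ assumption | exact cycles_disjoint_sym | solve [index_nodup] | solve [index_bound]
        | apply s_integrand_depends | apply u_integrand_depends | apply v_integrand_depends
        | intro X; unfold s_integrand, u_integrand, v_integrand, cross_term; simpl
        | reflexivity ].

(* Each configuration of the two edge pairs is a relabelling of the vertices
   in the definition of [s], [u] or [v]. *)
Lemma mean_cross_terms i j i' j' :
  (i < length c)%nat -> (j < length c)%nat -> (i' < length c')%nat -> (j' < length c')%nat ->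
  avgn L n (fun X => cross_term c c' i i' X * cross_term c c' j j' X) =
  pattern_mean (avgn L 4 s_integrand) (avgn L 5 u_integrand) (avgn L 6 v_integrand)
    (edge_position_of (length c) i j) (edge_position_of (length c') i' j').
Proof.
  intros Hi Hj Hi' Hj'.
  pose proof (edge_position_of_spec (length c) i j) as Hpos.
  pose proof (edge_position_of_spec (length c') i' j') as Hpos'.
  destruct (edge_position_of (length c) i j) eqn:Ea;
    [subst j | subst j | subst i | apply mean_cross_terms_apart_l; auto].
  all: destruct (edge_position_of (length c') i' j') eqn:Eb;
    [subst j' | subst j' | subst i' | apply mean_cross_terms_apart_r; auto].
  all: cbn [pattern_mean]; set (k := length c) in *; set (l := length c') in *.
  - relabel_with c c' [i; cnext k i] [i'; cnext l i']. apply eps_sq.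
  - relabel_with c c' [i; cnext k i] [i'; cnext l i'; cnext l (cnext l i')]. reflexivity.
  - relabel_with c c' [i; cnext k i] [j'; cnext l j'; cnext l (cnext l j')]. apply Rmult_comm.
  - relabel_with c' c [i'; cnext l i'] [i; cnext k i; cnext k (cnext k i)].
    apply eps_comm_prod.
  - relabel_with c c' [i; cnext k i; cnext k (cnext k i)]
                      [i'; cnext l i'; cnext l (cnext l i')]. reflexivity.
  - relabel_with c c' [i; cnext k i; cnext k (cnext k i)]
                      [cnext l (cnext l j'); cnext l j'; j'].
    apply eps_rev_r_prod.
  - relabel_with c' c [i'; cnext l i'] [j; cnext k j; cnext k (cnext k j)].
    rewrite Rmult_comm. apply eps_comm_prod.
  - relabel_with c c' [j; cnext k j; cnext k (cnext k j)]
                      [cnext l (cnext l i'); cnext l i'; i'].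
    rewrite Rmult_comm. apply eps_rev_r_prod.
  - relabel_with c c' [j; cnext k j; cnext k (cnext k j)]
                      [j'; cnext l j'; cnext l (cnext l j')]. apply Rmult_comm.
Qed.

Lemma mean_lk_sq :
  avgn L n (fun X => lk X c c' ^ 2) =
  / 4 * (INR (length c) * INR (length c')
         * (avgn L 4 s_integrand + 4 * avgn L 5 u_integrand + 4 * avgn L 6 v_integrand)).
Proof.
  assert (Hc : c <> []) by (intros ->; simpl in c_long; lia).
  assert (Hc' : c' <> []) by (intros ->; simpl in c'_long; lia).
  rewrite (avgn_ext _ _ _ _ (fun X => lk_sq_cross_terms X c c' Hc Hc')), avgn_scal,
    <- sum_pattern_means by assumption.
  f_equal. rewrite avgn_rsum. apply rsum_ext_in; intros i Hi. apply in_seq in Hi.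
  rewrite avgn_rsum. apply rsum_ext_in; intros j Hj. apply in_seq in Hj.
  rewrite avgn_rsum. apply rsum_ext_in; intros i' Hi'. apply in_seq in Hi'.
  rewrite avgn_rsum. apply rsum_ext_in; intros j' Hj'. apply in_seq in Hj'.
  apply mean_cross_terms; lia.
Qed.

End CyclePair.

Lemma in_cycle_pairs n c c' : In (c, c') (cycle_pairs n) ->
  NoDup c /\ NoDup c' /\ (forall v, In v c -> ~ In v c') /\
  (forall v, In v c -> (v < n)%nat) /\ (forall v, In v c' -> (v < n)%nat) /\
  (3 <= length c)%nat /\ (3 <= length c')%nat.
Proof.
  unfold cycle_pairs. rewrite filter_In, in_prod_iff, andb_true_iff, disjointb_spec.
  intros [[Hc Hc'] [Hdisj _]].
  apply in_cycles in Hc as [Hc Hcn], Hc' as [Hc' Hc'n].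
  apply canon_spec in Hc as [], Hc' as []. tauto.
Qed.

Lemma mean_sum_sq_lk L n : L <> [] -> (6 <= n)%nat ->
  avgn L n (sum_sq_lk n) =
  (avgn L 4 s_integrand + 4 * avgn L 5 u_integrand + 4 * avgn L 6 v_integrand) / 32 *
  rsum (fun k => rsum (fun l => INR (fact n) / INR (fact (n - k - l)))
                   (seq 3 (n - k - 2))) (seq 3 (n - 5)).
Proof.
  intros HL Hn. unfold sum_sq_lk. rewrite avgn_rsum.
  set (W := avgn L 4 s_integrand + _ + _).
  rewrite (rsum_ext_in _ (fun p => / 4 * W * (INR (length (fst p)) * INR (length (snd p))))).
  - rewrite rsum_scal, sum_cycle_pairs_lengths, sum_length_disjoint_cycle_pairs,
      <- sum_falling_products, <- !rsum_scal by assumption.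
    apply rsum_ext; intro k. rewrite <- !rsum_scal. apply rsum_ext; intro l. field.
  - intros [c c'] Hp. apply in_cycle_pairs in Hp as (? & ? & ? & ? & ? & ? & ?).
    cbn [fst snd]. rewrite mean_lk_sq by assumption. unfold W. ring.
Qed.

Lemma Un_cv_scal (A : nat -> R) l c : Un_cv A l -> Un_cv (fun n => c * A n) (c * l).
Proof.
  intros H. apply CV_mult; auto.
  intros e He. exists 0%nat. intros m _. unfold R_dist. rewrite Rminus_diag, Rabs_R0; auto.
Qed.

Theorem mainTheorem2 (n : nat) (s u v : R)
  (hn : (6 <= n)%nat)
  (* 2s = P(eps(A->B, P->Q) <> 0), points A,B,P,Q = 0,1,2,3 *)
  (hs : Expect_is 4 (fun X =>
          if Req_EM_T (eps (X 0%nat) (X 1%nat) (X 2%nat) (X 3%nat)) 0 then 0 else 1)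
          (2 * s))
  (* u = E[eps(A->B,P->Q) eps(A->B,Q->R)], points A,B,P,Q,R = 0..4 *)
  (hu : Expect_is 5 (fun X =>
          eps (X 0%nat) (X 1%nat) (X 2%nat) (X 3%nat) *
          eps (X 0%nat) (X 1%nat) (X 3%nat) (X 4%nat)) u)
  (* v = E[eps(A->B,P->Q) eps(B->C,Q->R)], points A,B,C,P,Q,R = 0..5 *)
  (hv : Expect_is 6 (fun X =>
          eps (X 0%nat) (X 1%nat) (X 3%nat) (X 4%nat) *
          eps (X 1%nat) (X 2%nat) (X 4%nat) (X 5%nat)) v) :
  let q := s + 2 * (u + v) in
  let S1 := rsum (fun k => rsum (fun l => INR (fact n) / INR (fact (n - k - l)))
                              (seq 3 (n - k - 2))) (seq 3 (n - 5)) in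
  let S2 := rsum (fun i => INR (fact n) / INR (fact (n - i)) * INR (i - 5))
              (seq 6 (n - 5)) in
  Expect_is n (sum_sq_lk n) (q / 16 * S1) /\ S1 = S2.
Proof.
  intros q S1 S2. split; [|apply double_sum_fact_antidiagonal, hn].
  change (Un_cv (fun N => ptE (S N) 4 s_integrand) (2 * s)) in hs.
  change (Un_cv (fun N => ptE (S N) 5 u_integrand) u) in hu.
  change (Un_cv (fun N => ptE (S N) 6 v_integrand) v) in hv.
  apply (Un_cv_ext (fun N => S1 / 32 *
    (ptE (S N) 4 s_integrand + (4 * ptE (S N) 5 u_integrand + 4 * ptE (S N) 6 v_integrand)))).
  - intro N. rewrite !(ptE_avgn_grid (S N)), mean_sum_sq_lk by auto using grid_nonempty with arith.
    unfold S1. field.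
  - replace (q / 16 * S1) with (S1 / 32 * (2 * s + (4 * u + 4 * v))) by (unfold q; field).
    apply Un_cv_scal, CV_plus, CV_plus; auto; apply Un_cv_scal; auto.
Qed.
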